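(* Let $(S,\mathit{Act},P,\mu)$ be an MDP with a bounded measurable reward $r$ (specified below), let $\pi$ be any stationary policy, and let $\gamma\in(0,1)$. Let $I\subseteq S$ be measurable and let $A,B\subseteq S$ be measurable. Write $U:=B\cup \mathrm{Abs}_\pi\big((A\cup B)^c\big)$ (assumed measurable). Assume: 1. (Invariant) $I$ is absorbing under $\pi$ and $\mu(I)=1$. 2. (Almost-sure reachability) For all $s\in I$, $\Pr_\pi(\tau_U<\infty\mid S_0=s)=1$. 3. (Uniform bound on hitting time) There is a constant $\bar H<\infty$ such that for all $s\in (A\setminus B)\cap I$, $\mathbb{E}_\pi[\tau_U\mid S_0=s]\le \bar H$. 4. (Reward) $r(s,a,s')=\mathbf 1_{\{s\in U\}}$ for all $s,a,s'$. Then the function $W:I\to\mathbb{R}$, $W(s):=C-V^\pi(s)$ with $C:=\frac{1}{1-\gamma}$, is a Streett supermartingale for $(A,B)$ under $\pi$ with supporting invariant $I$.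
   Context: State space $S$ and action space $\mathit{Act}$ are each finite or countable (discrete $\sigma$-algebra) or Borel subsets of a Euclidean space (Borel $\sigma$-algebra). An MDP $(S,\mathit{Act},P,\mu)$ consists of a stochastic kernel $P(\cdot\mid s,a)$ on $S$ given $S\times\mathit{Act}$ and an initial distribution $\mu$ on $S$. A stationary policy $\pi$ is a stochastic kernel $\pi(\cdot\mid s)$ on $\mathit{Act}$ given $S$. For $s\in S$, $\Pr_\pi(\cdot\mid S_0=s)$ and $\mathbb{E}_\pi[\cdot\mid S_0=s]$ denote probability and expectation for the process $(S_t,A_t)_{t\ge0}$ with $S_0=s$, $A_t\sim\pi(\cdot\mid S_t)$, $S_{t+1}\sim P(\cdot\mid S_t,A_t)$. Given a measurable reward $r:S\times\mathit{Act}\times S\to\mathbb{R}$ and $\gamma\in(0,1)$, the value function is $V^\pi(s)=\mathbb{E}_\pi\big[\sum_{t\ge0}\gamma^t r(S_t,A_t,S_{t+1})\mid S_0=s\big]$. A measurable set $X\subseteq S$ is absorbing under $\pi$ if $\Pr_\pi(S_1\in X\mid S_0=s)=1$ for all $s\in X$. For measurable $X$, $\mathrm{Abs}_\pi(X):=\{s\in S:\Pr_\pi(\forall t\ge0:\ S_t\in X\mid S_0=s)=1\}$ (largest absorbing subset). The first hitting time of a measurable $U$ is $\tau_U:=\inf\{t\ge0:S_t\in U\}$ (with $\inf\emptyset=\infty$). Streett supermartingale: given measurable $A,B,I\subseteq S$, a function $W:I\to[0,\infty)$ is a Streett supermartingale for $(A,B)$ under $\pi$ with supporting invariant $I$ if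 (i) $\mu(I)=1$; (ii) $\Pr_\pi(S_1\in I\mid S_0=s)=1$ for all $s\in I$; (iii) there is a constant $\varepsilon>0$ with $\mathbb{E}_\pi[W(S_1)\mid S_0=s]\le W(s)-\varepsilon$ for all $s\in (A\setminus B)\cap I$; (iv) $\mathbb{E}_\pi[W(S_1)\mid S_0=s]\le W(s)$ for all $s\in I\setminus(A\cup B)$. *)

From HB Require Import structures.
From mathcomp Require Import all_boot all_order all_algebra.
From mathcomp Require Import all_classical all_reals.
From mathcomp Require Import ereal topology normedtype sequences esum measure.
From mathcomp Require Import lebesgue_measure lebesgue_integral numfun probability kernel.

Set Implicit Arguments.
Unset Strict Implicit.
Unset Printing Implicit Defensive.

Import Order.TTheory GRing.Theory Num.Theory.
Local Open Scope classical_set_scope.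
Local Open Scope ring_scope.
Local Open Scope ereal_scope.

(* All path quantities used in the statement are events /
   expectations that are determined by finite-dimensional marginals; we define
   them honestly via iterated integrals against the one-step kernel
   s |-> \int[pi s]_a P (s, a) (.) and monotone limits over the horizon. *)

Section MDP.
Context {R : realType} {dS dA : measure_display}
  {S : measurableType dS} {Act : measurableType dA}.
Variables (P : R.-pker (S * Act) ~> S) (pi : R.-pker S ~> Act).

Definition stepE (D : set S) (f : S -> \bar R) (s : S) : \bar R :=
  \int[pi s]_a \int[P (s, a)]_(y in D) f y.

Definition Pr1 (X : set S) (s : S) : \bar R := \int[pi s]_a P (s, a) X.

(* survive X n s = Pr_pi(S_0, ..., S_n all in X | S_0 = s) *)
Fixpoint survive (X : set S) (n : nat) (s : S) : \bar R :=
  match n with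
  | 0 => (\1_X s)%:E
  | m.+1 => (\1_X s)%:E * stepE setT (survive X m) s
  end.

Definition Pr_always (X : set S) (s : S) : \bar R := limn (fun n => survive X n s).

Definition Abs (X : set S) : set S := [set s | Pr_always X s = 1].

(* hit U n s = Pr_pi(tau_U <= n | S_0 = s) *)
Fixpoint hit (U : set S) (n : nat) (s : S) : \bar R :=
  match n with
  | 0 => (\1_U s)%:E
  | m.+1 => (\1_U s)%:E + (\1_(~` U) s)%:E * stepE setT (hit U m) s
  end.

Definition Pr_hit_finite (U : set S) (s : S) : \bar R := limn (fun n => hit U n s).

(* E_pi[tau_U | S_0 = s] = \sum_{n >= 0} Pr_pi(tau_U > n | S_0 = s),
   where {tau_U > n} = {S_0, ..., S_n not in U} (value +oo allowed) *)
Definition E_hittime (U : set S) (s : S) : \bar R :=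
  \sum_(0 <= n <oo) survive (~` U) n s.

Fixpoint iterE (t : nat) (f : S -> \bar R) (s : S) : \bar R :=
  match t with
  | 0 => f s
  | m.+1 => stepE setT (iterE m f) s
  end.

Definition one_step_reward (r : S * Act * S -> R) (x : S) : \bar R :=
  \int[pi x]_a \int[P (x, a)]_y (r (x, a, y))%:E.

Definition value (r : S * Act * S -> R) (gamma : R) (s : S) : \bar R :=
  \sum_(0 <= t <oo) ((gamma ^+ t)%:E * iterE t (one_step_reward r) s).

(* Streett supermartingale W (a function I -> [0, oo), represented as a
   function on S whose values outside I are irrelevant) *)
Definition streett_supermartingale (mu : probability S R)
    (A B I : set S) (W : S -> R) : Prop :=
  [/\ (forall s, I s -> (0 <= W s)%R),
      mu I = 1,
      (forall s, I s -> Pr1 I s = 1),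
      (exists eps : R, (0 < eps)%R /\
         forall s, ((A `\` B) `&` I) s ->
           stepE I (fun y => (W y)%:E) s <= (W s - eps)%:E) &
      (forall s, (I `\` (A `|` B)) s ->
           stepE I (fun y => (W y)%:E) s <= (W s)%:E)].

End MDP.

From HB Require Import structures.
From mathcomp Require Import all_boot all_order all_algebra.
From mathcomp Require Import all_classical all_reals.
From mathcomp Require Import ereal topology normedtype sequences esum measure.
From mathcomp Require Import lebesgue_measure lebesgue_integral numfun probability kernel.
From mathcomp Require Import measurable_realfun lra.

(* Let V be the discounted value of the reward 1_U and T V s the expectation of
   V(S_1) given S_0 = s, so that W = C - V and, by Bellman's equation
   V = 1_U + gamma T V, the expected next value of W is at most
   C - T V = W + 1_U - (1 - gamma) T V.
   - Off U we have V = gamma T V <= T V, so W does not increase in expectation.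
   - On A \ B (which lies off U) Markov's inequality for the hitting time shows
     that U is reached within N > 2 Hbar steps with probability >= 1/2, hence
     T V >= V >= gamma^N / 2 and W decreases by at least (1 - gamma) gamma^N / 2.
   - The states of U outside A u B lie in Abs((A u B)^c), which is absorbing, so
     there V = T V = C and the drift 1 - (1 - gamma) C vanishes. *)

Set Implicit Arguments.
Unset Strict Implicit.
Unset Printing Implicit Defensive.

Import Order.TTheory GRing.Theory Num.Theory.
Local Open Scope classical_set_scope.
Local Open Scope ring_scope.
Local Open Scope ereal_scope.

Lemma itv_fin_num (R : realDomainType) (x : \bar R) (c : R) :
  0 <= x <= c%:E -> x \is a fin_num.
Proof. by case/andP=> x0 xc; rewrite ge0_fin_numE // (le_lt_trans xc) ?ltey. Qed.

Lemma nneseries_geometric (R : realType) (g : R) : (0 <= g < 1)%R ->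
  \sum_(0 <= t <oo) (g ^+ t)%:E = ((1 - g)^-1)%:E.
Proof.
move=> /andP[g0 g1].
rewrite (_ : (fun n => _) = EFin \o series (geometric 1 g)); last first.
  apply/funext => n /=; rewrite /series /= sumEFin; congr (_%:E).
  by apply: eq_bigr => i _; rewrite mul1r.
have g_lt1 : (`|g| < 1)%R by rewrite ger0_norm.
apply: cvg_lim => //; rewrite -div1r.
exact: (cvg_comp _ _ (cvg_geometric_series (a := 1) g_lt1)).
Qed.

Lemma ae_eq1_integral d (T : measurableType d) (R : realType)
    (mu : probability T R) (f : T -> \bar R) :
  measurable_fun setT f -> (forall x, 0 <= f x <= 1) ->
  \int[mu]_x f x = 1 -> \forall x \ae mu, f x = 1.
Proof.
move=> mf f01 intf1; have ffin x := itv_fin_num (f01 x).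
have g0 x : 0 <= 1 - f x by rewrite sube_ge0 ?ffin //; case/andP: (f01 x).
have mg : measurable_fun setT (fun x => 1 - f x) by exact: emeasurable_funB.
have intg0 : \int[mu]_x (1 - f x) = 0.
  have := ge0_integralD mu measurableT (fun x _ => g0 x) mg
    (fun x _ => proj1 (andP (f01 x))) mf.
  under eq_integral do rewrite subeK ?ffin //.
  rewrite integral_cst //= probability_setT mule1 intf1 => /esym.
  by move/(congr1 (fun x => x - 1)); rewrite addeK // subee.
have : ae_eq mu setT (fun x => 1 - f x) (cst 0).
  apply/ae_eq_integral_abs => //.
  by under eq_integral do rewrite gee0_abs ?g0 //.
apply: filterS => x /(_ I) f1.
by rewrite -[RHS](subeK 1 (ffin x)) f1 add0e.
Qed.

Section controlled_chain.
Context {R : realType} {dS dA : measure_display}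
  {S : measurableType dS} {Act : measurableType dA}.
Variables (P : R.-pker (S * Act) ~> S) (pi : R.-pker S ~> Act).

Lemma kcomp_setT s : kcomp pi P s setT = 1.
Proof.
rewrite /kcomp; under eq_integral do rewrite prob_kernel.
by rewrite integral_cst // prob_kernel mule1.
Qed.

HB.instance Definition _ s :=
  Measure_isProbability.Build _ _ R (kcomp pi P s) (kcomp_setT s).

Definition trans (s : S) : probability S R := kcomp pi P s.

Definition eindic (U : set S) (y : S) : \bar R := (\1_U y)%:E.

Definition prob_valued (f : S -> \bar R) : Prop :=
  measurable_fun [set: S] f /\ forall y, 0 <= f y <= 1.

Lemma prob_valued_ge0 f : prob_valued f -> forall y, 0 <= f y.
Proof. by move=> [_ f01] y; case/andP: (f01 y). Qed.

Lemma prob_valued_le1 f : prob_valued f -> forall y, f y <= 1.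
Proof. by move=> [_ f01] y; case/andP: (f01 y). Qed.

Lemma stepE_setT f s : (forall y, 0 <= f y) -> measurable_fun setT f ->
  stepE P pi setT f s = \int[trans s]_y f y.
Proof. by move=> f0 mf; rewrite /stepE /trans integral_kcomp. Qed.

Lemma stepE_le D f s : measurable D -> (forall y, 0 <= f y) ->
  measurable_fun setT f -> stepE P pi D f s <= \int[trans s]_y f y.
Proof.
move=> mD f0 mf; have fD0 y : 0 <= (f \_ D) y by rewrite patchE; case: ifP.
have mfD : measurable_fun setT (f \_ D).
  by apply/(measurable_restrictT _ mD); exact: measurable_funS mf.
rewrite (_ : stepE _ _ _ _ _ = stepE P pi setT (f \_ D) s); last first.
  by apply: eq_integral => a _; rewrite integral_mkcond.
rewrite stepE_setT //; apply: ge0_le_integral => // y _.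
by rewrite patchE; case: ifP.
Qed.

Lemma measurable_trans_integral f : (forall y, 0 <= f y) ->
  measurable_fun setT f -> measurable_fun setT (fun s => \int[trans s]_y f y).
Proof.
move=> f0 mf; apply: measurable_fun_integral_kernel => // U mU.
exact: (measurable_kernel (pi \; P)).
Qed.

Lemma integral_trans_le f (c : \bar R) s : measurable_fun setT f ->
  (forall y, 0 <= f y <= c) -> \int[trans s]_y f y <= c.
Proof.
move=> mf f0c; apply: (@le_trans _ _ (\int[trans s]_y (cst c y))).
  by apply: ge0_le_integral => // y _; case/andP: (f0c y).
by rewrite integral_cst //= probability_setT mule1.
Qed.

Lemma prob_valued_eindic U : measurable U -> prob_valued (eindic U).
Proof.
move=> mU; split; first exact/measurable_EFinP/measurable_indic.
by move=> y; rewrite !lee_fin indicE; case: (y \in U); rewrite /= ?lexx ?ler01.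
Qed.

Lemma prob_valued_trans f : prob_valued f ->
  prob_valued (fun s => \int[trans s]_y f y).
Proof.
move=> pf; have [mf f01] := pf; split.
  exact: measurable_trans_integral (prob_valued_ge0 pf) mf.
move=> s; rewrite integral_trans_le // andbT.
by apply: integral_ge0 => y _; exact: prob_valued_ge0.
Qed.

Lemma prob_valued_mul f g : prob_valued f -> prob_valued g ->
  prob_valued (fun y => f y * g y).
Proof.
move=> [mf f01] [mg g01]; split; first exact: emeasurable_funM.
move=> y; have /andP[f0 f1] := f01 y; have /andP[g0 g1] := g01 y.
by rewrite mule_ge0 //= -[leRHS]mule1 lee_pmul.
Qed.

Lemma prob_valued_iterE t f : prob_valued f -> prob_valued (iterE P pi t f).
Proof.
move=> pf; elim: t => [//|t pt] /=.
rewrite (_ : stepE _ _ _ _ = fun s => \int[trans s]_y iterE P pi t f y).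
  exact: prob_valued_trans.
by apply/funext => s; rewrite stepE_setT //; [exact: prob_valued_ge0|case: pt].
Qed.

Lemma iterES t f s : prob_valued f ->
  iterE P pi t.+1 f s = \int[trans s]_y iterE P pi t f y.
Proof.
move=> /(prob_valued_iterE t) pt.
by rewrite /= stepE_setT //; [exact: prob_valued_ge0|case: pt].
Qed.

Lemma prob_valued_survive X n : measurable X -> prob_valued (survive P pi X n).
Proof.
move=> mX; elim: n => [|n pn]; first exact: prob_valued_eindic.
rewrite (_ : survive _ _ _ _ = fun s =>
    eindic X s * \int[trans s]_y survive P pi X n y).
  by apply: prob_valued_mul; [exact: prob_valued_eindic|exact: prob_valued_trans].
by apply/funext => s /=; rewrite stepE_setT //; [exact: prob_valued_ge0|case: pn].
Qed.

Lemma surviveS X n s : measurable X ->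
  survive P pi X n.+1 s = eindic X s * \int[trans s]_y survive P pi X n y.
Proof.
move=> mX; have pn := prob_valued_survive n mX.
by rewrite /= stepE_setT //; [exact: prob_valued_ge0|case: pn].
Qed.

Lemma survive_nonincreasing X s : measurable X ->
  nonincreasing_seq (survive P pi X ^~ s).
Proof.
move=> mX; have pX := prob_valued_eindic mX.
apply/nonincreasing_seqP => n; elim: n s => [|n IH] s.
  rewrite surviveS // -[leRHS]mule1.
  apply: lee_wpmul2l; first exact: prob_valued_ge0.
  exact: prob_valued_le1 (prob_valued_trans (prob_valued_survive 0 mX)) s.
rewrite surviveS // [leRHS]surviveS //.
apply: lee_wpmul2l; first exact: prob_valued_ge0.
apply: ge0_le_integral => //.
- by move=> y _; exact: prob_valued_ge0 (prob_valued_survive n.+1 mX) y.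
- exact: (prob_valued_survive n.+1 mX).1.
- exact: (prob_valued_survive n mX).1.
Qed.

Lemma Abs_survive X s : measurable X ->
  Abs P pi X s <-> forall n, survive P pi X n s = 1.
Proof.
move=> mX; rewrite /Abs /Pr_always /=; split=> [|h]; last first.
  by rewrite (_ : survive P pi X ^~ s = cst 1) ?lim_cst //; exact/funext.
rewrite (cvg_lim _ (ereal_nonincreasing_cvgn (survive_nonincreasing s mX))) //.
move=> h n; apply/le_anti.
rewrite (prob_valued_le1 (prob_valued_survive n mX)) /= -{1}h.
by apply: ereal_inf_lbound; exists n.
Qed.

Lemma Abs_sub X : measurable X -> Abs P pi X `<=` X.
Proof.
move=> mX s /(Abs_survive s mX)/(_ 0%N) /=; rewrite indicE.
by have [/set_mem //|_ [] /esym/eqP] := boolP (s \in X); rewrite oner_eq0.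
Qed.

Lemma measurable_Abs X : measurable X -> measurable (Abs P pi X).
Proof.
move=> mX; rewrite (_ : Abs P pi X = \bigcap_n (survive P pi X n @^-1` [set 1])).
  apply: bigcapT_measurable => n; rewrite -[X in measurable X]setTI.
  exact: (prob_valued_survive n mX).1.
apply/seteqP; split => s; first by move/(Abs_survive s mX) => h n _; exact: h.
by move=> h; apply/(Abs_survive s mX) => n; exact: h.
Qed.

(* Surviving one more step from s means that each survive X n has
   trans s-integral 1, so trans s-almost every state survives forever. *)
Lemma trans_Abs X s : measurable X -> Abs P pi X s -> trans s (Abs P pi X) = 1.
Proof.
move=> mX sX; have mAbs := measurable_Abs mX.
have int1 n : \int[trans s]_y survive P pi X n y = 1.
  have := (Abs_survive s mX).1 sX n.+1.
  by rewrite surviveS // /eindic indicE mem_set ?mul1e //; exact: Abs_sub.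
have ae1 : \forall y \ae trans s, forall n, survive P pi X n y = 1.
  apply: ae_foralln => n; apply: ae_eq1_integral (int1 n).
  - exact: (prob_valued_survive n mX).1.
  - exact: (prob_valued_survive n mX).2.
have negl : (trans s).-negligible (~` Abs P pi X).
  by apply: negligibleS ae1; apply: subsetC => y /(Abs_survive y mX).
have := probability_setC (trans s) mAbs.
rewrite (measure_negligible (measurableC mAbs) negl) => /esym Abs1.
by apply/le_anti; rewrite probability_le1 //= -sube_le0 Abs1.
Qed.

Lemma iterE_indic_Abs X U t s : measurable X -> measurable U ->
  Abs P pi X `<=` U -> Abs P pi X s -> iterE P pi t (eindic U) s = 1.
Proof.
move=> mX mU XU; have pU := prob_valued_eindic mU.
have pAbs := prob_valued_eindic (measurable_Abs mX).
elim: t s => [|t IH] s sX; first by rewrite /= /eindic indicE mem_set //; exact: XU.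
have pt := prob_valued_iterE t pU.
rewrite iterES //; apply/le_anti; rewrite (prob_valued_le1 (prob_valued_trans pt)) /=.
rewrite -(trans_Abs mX sX) -[in X in X <= _](setIT (Abs P pi X)).
rewrite -integral_indic //; last exact: measurable_Abs.
apply: ge0_le_integral => //; [exact: pAbs.1|exact: pt.1|] => y _.
rewrite indicE; have [/set_mem yX|_] := boolP (y \in _); first by rewrite IH.
exact: prob_valued_ge0.
Qed.

Lemma survive_le_hittime U N s : measurable U ->
  N.+1%:R%:E * survive P pi (~` U) N s <= E_hittime P pi U s.
Proof.
move=> mU; have mCU := measurableC mU.
have surv0 n := prob_valued_ge0 (prob_valued_survive n mCU) s.
apply: le_trans (nneseries_lim_ge N.+1 (fun n _ _ => surv0 n)).
rewrite mule_natl (_ : (_ *+ N.+1)%E =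
  \sum_(0 <= n < N.+1) survive P pi (~` U) N s); last by rewrite sumr_const_nat.
rewrite big_nat_cond [leRHS]big_nat_cond; apply: lee_sum => i /andP[/andP[_ iN] _].
by apply: (survive_nonincreasing s mCU); rewrite -ltnS.
Qed.

Lemma one_le_survive_add_visits U n s : measurable U ->
  1 <= survive P pi (~` U) n s + \sum_(0 <= t < n.+1) iterE P pi t (eindic U) s.
Proof.
move=> mU; have mCU := measurableC mU; have pU := prob_valued_eindic mU.
elim: n s => [|n IH] s.
  rewrite big_nat1 /= /eindic !indicE in_setC.
  by case: (s \in U); rewrite /= ?add0e ?adde0.
have pt t := prob_valued_iterE t pU.
have ps := prob_valued_survive n mCU.
have sum0 y : 0 <= \sum_(0 <= t < n.+1) iterE P pi t (eindic U) y.
  by apply: sume_ge0 => t _; exact: prob_valued_ge0.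
have msum : measurable_fun setT
    (fun y => \sum_(0 <= t < n.+1) iterE P pi t (eindic U) y).
  by apply: emeasurable_sum => t; exact: (pt t).1.
rewrite surviveS // big_nat_recl //; under eq_bigr do rewrite iterES //.
rewrite -ge0_integral_sum //; last by move=> t y _; exact: prob_valued_ge0.
  2: by move=> t; exact: (pt t).1.
set a := \int[trans s]_y _; set b := \int[trans s]_y _.
have b0 : 0 <= b by apply: integral_ge0 => y _.
have ab1 : 1 <= a + b.
  rewrite /a /b -ge0_integralD //;
    [|by move=> y _; exact: prob_valued_ge0|exact: ps.1].
  apply: le_trans (ge0_le_integral _ _ _ _ _ (fun y _ => IH y)) => //.
    by rewrite integral_cst //= probability_setT mule1.
  exact: emeasurable_funD ps.1 msum.
change (iterE P pi 0 (eindic U) s) with (eindic U s).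
rewrite /eindic !indicE in_setC; case: (s \in U) => /=.
  by rewrite mul0e add0e leeDl.
by rewrite mul1e add0e.
Qed.

Definition discounted (g : S -> \bar R) (gamma : R) (s : S) : \bar R :=
  \sum_(0 <= t <oo) ((gamma ^+ t)%:E * iterE P pi t g s).

Lemma one_step_reward_state (r : S * Act * S -> R) (h : S -> R) :
  (forall s a s', r (s, a, s') = h s) ->
  one_step_reward P pi r = fun s => (h s)%:E.
Proof.
move=> rh; apply/funext => s; rewrite /one_step_reward.
under eq_integral => a _ do
  (under eq_integral => y _ do rewrite rh; rewrite integral_cst //= prob_kernel mule1).
by rewrite integral_cst //= prob_kernel mule1.
Qed.

Section discounted_sum.
Variables (g : S -> \bar R) (gamma : R).
Hypotheses (pg : prob_valued g) (gamma01 : (0 <= gamma < 1)%R).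

Let pt t := prob_valued_iterE t pg.

Let term_ge0 t y : 0 <= (gamma ^+ t)%:E * iterE P pi t g y.
Proof.
have /andP[g0 _] := gamma01.
by rewrite mule_ge0 ?lee_fin ?exprn_ge0 //; exact: prob_valued_ge0.
Qed.

Let measurable_term t :
  measurable_fun setT (fun y => (gamma ^+ t)%:E * iterE P pi t g y).
Proof. exact/measurable_funeM/(pt t).1. Qed.

Lemma discounted_ge0 s : 0 <= discounted g gamma s.
Proof. by apply: nneseries_ge0 => t _ _; exact: term_ge0. Qed.

Lemma discounted_le s : discounted g gamma s <= ((1 - gamma)^-1)%:E.
Proof.
have /andP[g0 _] := gamma01.
rewrite -nneseries_geometric //; apply: lee_nneseries => [t _ _|t _].
  exact: term_ge0.
rewrite -[leRHS]mule1 lee_wpmul2l ?lee_fin ?exprn_ge0 //.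
exact: prob_valued_le1.
Qed.

Lemma discounted_fin_num s : discounted g gamma s \is a fin_num.
Proof.
by apply: (itv_fin_num (c := (1 - gamma)^-1)); rewrite discounted_ge0 discounted_le.
Qed.

Lemma measurable_discounted : measurable_fun setT (discounted g gamma).
Proof.
apply: (ge0_emeasurable_sum (P := xpredT)) => [t y _ _|t _]; first exact: term_ge0.
exact: measurable_term.
Qed.

Lemma discounted_bellman s :
  discounted g gamma s = g s + gamma%:E * \int[trans s]_y discounted g gamma y.
Proof.
have /andP[g0 _] := gamma01.
rewrite /discounted (integral_nneseries _ _ measurable_term) //.
rewrite nneseries_recl // expr0 mul1e; congr (_ + _).
rewrite -nneseriesZl //; last first.
  by move=> t _; apply: integral_ge0 => y _; exact: term_ge0.
rewrite -[LHS](nneseries_addn _ (fun t => term_ge0 t s)).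
apply: eq_eseriesr => t _; rewrite ge0_integralZl //.
- by rewrite addn1 iterES // exprS EFinM muleA.
- exact: (pt t).1.
- by move=> y _; exact: prob_valued_ge0.
- by rewrite lee_fin exprn_ge0.
Qed.

Lemma discounted_ge_visits N s :
  (gamma ^+ N)%:E * \sum_(0 <= t < N.+1) iterE P pi t g s <= discounted g gamma s.
Proof.
have /andP[g0 g1] := gamma01.
rewrite ge0_sume_distrr; last by move=> t _; exact: prob_valued_ge0.
apply: le_trans (nneseries_lim_ge N.+1 (fun t _ _ => term_ge0 t s)).
rewrite big_nat_cond [leRHS]big_nat_cond; apply: lee_sum => t /andP[/andP[_ tN] _].
apply: lee_wpmul2r; first exact: prob_valued_ge0.
by rewrite lee_fin ltnS in tN *; apply: ler_wiXn2l tN => //; exact: ltW.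
Qed.

Lemma discounted_max s : (forall t, iterE P pi t g s = 1) ->
  discounted g gamma s = ((1 - gamma)^-1)%:E.
Proof.
move=> iter1; rewrite -nneseries_geometric //.
by apply: eq_eseriesr => t _; rewrite iter1 mule1.
Qed.

End discounted_sum.

(* Markov's inequality gives Pr(tau_U > N) <= E tau_U / (N + 1) < 1/2, so U is
   visited within N steps with probability at least 1/2. *)
Lemma discounted_indic_ge U gamma H N s : measurable U -> (0 <= gamma < 1)%R ->
  (2 * H < N.+1%:R)%R -> E_hittime P pi U s <= H%:E ->
  ((gamma ^+ N) / 2)%:E <= discounted (eindic U) gamma s.
Proof.
move=> mU g01 HN hitH; have /andP[g0 _] := g01.
have /andP[c0 c1] := (prob_valued_survive N (measurableC mU)).2 s.
set c := survive P pi (~` U) N s in c0 c1 *.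
have cfin : c \is a fin_num by apply: (itv_fin_num (c := 1%R)); rewrite c0 c1.
have c_half : (2 * fine c < 1)%R.
  have := le_trans (survive_le_hittime N s mU) hitH.
  rewrite -/c -(fineK cfin) -EFinM lee_fin => cH.
  have : (0 < N.+1%:R :> R)%R by rewrite ltr0n.
  nra.
apply: le_trans (discounted_ge_visits (prob_valued_eindic mU) g01 N s).
have := one_le_survive_add_visits N s mU; rewrite -/c -leeBlDl // => visits.
apply: le_trans (lee_wpmul2l _ visits); last by rewrite lee_fin exprn_ge0.
rewrite -(fineK cfin) -EFinB -EFinM lee_fin.
have : (0 <= gamma ^+ N)%R by rewrite exprn_ge0.
nra.
Qed.

Lemma stepE_sub_le D (c : R) (f : S -> \bar R) s : measurable D ->
  measurable_fun setT f -> (forall y, 0 <= f y <= c%:E) ->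
  stepE P pi D (fun y => (c - fine (f y))%:E) s <=
    (c - fine (\int[trans s]_y f y))%:E.
Proof.
move=> mD mf f0c; have ffin y := itv_fin_num (f0c y).
have g0 y : 0 <= c%:E - f y by rewrite sube_ge0 ?ffin ?orbT //; case/andP: (f0c y).
have mg : measurable_fun setT (fun y => c%:E - f y) by exact: emeasurable_funB.
rewrite (_ : (fun y => _) = fun y => c%:E - f y); last first.
  by apply/funext => y; rewrite EFinB fineK.
apply: le_trans (stepE_le s mD g0 mg) _.
have := ge0_integralD (trans s) measurableT (fun y _ => g0 y) mg
  (fun y _ => proj1 (andP (f0c y))) mf.
under eq_integral do rewrite subeK ?ffin //.
rewrite integral_cst //= probability_setT mule1 => cE.
have intffin : \int[trans s]_y f y \is a fin_num.
  apply: itv_fin_num; rewrite integral_trans_le // andbT.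
  by apply: integral_ge0 => y _; case/andP: (f0c y).
by rewrite EFinB fineK // leeBrDr // -cE.
Qed.

Section streett.
Variables (A B I : set S) (gamma : R).
Hypotheses (mA : measurable A) (mB : measurable B) (mI : measurable I)
  (gamma01 : (0 < gamma < 1)%R).

Let X := ~` (A `|` B).
Let U := B `|` Abs P pi X.
Let mX : measurable X. Proof. exact/measurableC/measurableU. Qed.
Let mU : measurable U. Proof. exact/measurableU/measurable_Abs. Qed.
Let gamma_ge0_lt1 : (0 <= gamma < 1)%R.
Proof. by case/andP: gamma01 => /ltW -> ->. Qed.
Let pU : prob_valued (eindic U). Proof. exact: prob_valued_eindic. Qed.
Let V := discounted (eindic U) gamma.
Let C := (1 - gamma)^-1%R.
Let v s := fine (V s).
Let tv s := fine (\int[trans s]_y V y).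

Let V_itv y : 0 <= V y <= C%:E.
Proof. by rewrite discounted_ge0 ?discounted_le. Qed.

Let intV_itv s : 0 <= \int[trans s]_y V y <= C%:E.
Proof.
rewrite integral_trans_le ?andbT //; last exact: measurable_discounted.
by apply: integral_ge0 => y _; case/andP: (V_itv y).
Qed.

Let v_bellman s : v s = (\1_U s + gamma * tv s)%R.
Proof.
apply: EFin_inj; rewrite EFinD EFinM /v /tv !fineK ?discounted_fin_num //.
  exact: discounted_bellman.
exact: itv_fin_num (intV_itv s).
Qed.

Let tv_ge0 s : (0 <= tv s)%R.
Proof. by apply: fine_ge0; case/andP: (intV_itv s). Qed.

Let stepE_W s : stepE P pi I (fun y => (C - v y)%:E) s <= (C - tv s)%:E.
Proof.
exact: stepE_sub_le s mI (measurable_discounted pU gamma_ge0_lt1) V_itv.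
Qed.

Lemma streett_W_ge0 s : (0 <= C - v s)%R.
Proof.
rewrite subr_ge0 /v -lee_fin fineK ?discounted_fin_num //.
by case/andP: (V_itv s).
Qed.

Lemma streett_decrease H :
  (forall s, ((A `\` B) `&` I) s -> E_hittime P pi U s <= H%:E) ->
  exists eps : R, (0 < eps)%R /\ forall s, ((A `\` B) `&` I) s ->
    stepE P pi I (fun y => (C - v y)%:E) s <= (C - v s - eps)%:E.
Proof.
move=> hH; set N := Num.truncn (2 * H).
have /andP[g0 g1] := gamma01.
pose delta := (gamma ^+ N / 2)%R.
have delta0 : (0 < delta)%R by rewrite divr_gt0 // exprn_gt0.
exists (delta * (1 - gamma))%R; split; first by rewrite mulr_gt0 // subr_gt0.
move=> s [[sA sB] sI].
have sU : ~ U s by case=> [//|/(Abs_sub mX) sX]; apply: sX; left.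
have := v_bellman s; rewrite indicE memNset // add0r => vs.
have vdelta : (delta <= v s)%R.
  rewrite /v -lee_fin fineK ?discounted_fin_num //.
  exact: discounted_indic_ge gamma_ge0_lt1 (truncnS_gt _)
    (hH s (conj (conj sA sB) sI)).
have tv_delta : (delta <= tv s)%R.
  by apply: le_trans vdelta _; rewrite vs ler_piMl // ltW.
apply: le_trans (stepE_W s) _; rewrite lee_fin.
have : (0 <= (1 - gamma) * (tv s - delta))%R by apply: mulr_ge0; lra.
lra.
Qed.

Lemma streett_nonincrease s : (I `\` (A `|` B)) s ->
  stepE P pi I (fun y => (C - v y)%:E) s <= (C - v s)%:E.
Proof.
move=> [_ nAB]; apply: le_trans (stepE_W s) _; rewrite lee_fin.
have /andP[g0 g1] := gamma01.
have vs := v_bellman s; have tv0 := tv_ge0 s.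
have [sU|sU] := pselect (U s); last first.
  move: vs; rewrite indicE memNset // add0r => vs.
  have : (0 <= (1 - gamma) * tv s)%R by apply: mulr_ge0; lra.
  lra.
have sX : Abs P pi X s by case: sU => // sB; exfalso; apply: nAB; right.
have vC : v s = C.
  rewrite /v /V discounted_max //= => t.
  exact: iterE_indic_Abs mX mU (fun y yX => or_intror yX) sX.
move: vs; rewrite indicE mem_set //= vC => vs.
have C1 : (C * (1 - gamma) = 1)%R by rewrite mulVf // subr_eq0 gt_eqF.
have /mulfI tvC : gamma != 0%R by rewrite gt_eqF.
by rewrite (tvC (tv s) C) ?subrr //; lra.
Qed.

End streett.

End controlled_chain.

Theorem theorem1 (R : realType) (dS dA : measure_display)
  (S : measurableType dS) (Act : measurableType dA)
  (P : R.-pker (S * Act) ~> S) (mu : probability S R)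
  (pi : R.-pker S ~> Act)
  (r : S * Act * S -> R) (gamma : R)
  (A B I : set S)
  (hr_meas : measurable_fun setT r)
  (hr_bdd : exists M : R, forall x, (`|r x| <= M)%R)
  (hgamma : (0 < gamma < 1)%R)
  (mI : measurable I) (mA : measurable A) (mB : measurable B)
  (mU : measurable (B `|` Abs P pi (~` (A `|` B))))
  (* 1. invariant *)
  (hIabs : forall s, I s -> Pr1 P pi I s = 1)
  (hmuI : mu I = 1)
  (* 2. almost-sure reachability *)
  (hreach : forall s, I s ->
     Pr_hit_finite P pi (B `|` Abs P pi (~` (A `|` B))) s = 1)
  (* 3. uniform bound on expected hitting time *)
  (hH : exists Hbar : R, forall s, ((A `\` B) `&` I) s ->
     E_hittime P pi (B `|` Abs P pi (~` (A `|` B))) s <= Hbar%:E)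
  (* 4. reward is the indicator of U *)
  (hrU : forall s a s', r (s, a, s') = \1_(B `|` Abs P pi (~` (A `|` B))) s) :
  streett_supermartingale P pi mu A B I
    (fun s => (1 - gamma)^-1 - fine (value P pi r gamma s))%R.
Proof.
have -> : value P pi r gamma =
    discounted P pi (eindic (B `|` Abs P pi (~` (A `|` B)))) gamma.
  by rewrite /value (one_step_reward_state P pi hrU).
have [H hHbar] := hH.
split=> //.
- by move=> s _; exact: streett_W_ge0.
- exact: streett_decrease hHbar.
- by move=> s; exact: streett_nonincrease.
Qed.
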